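(* Let $\sigma\colon S\curvearrowright A$ be an algebraic action satisfying the standing assumptions, with globalization $\tilde\sigma\colon\mathscr S\curvearrowright\mathscr A$ such that $\mathscr A$ is generated by $\bigcup_{g\in\mathscr S}\tilde\sigma_g(A)$. Let $\mathbb I=\{[A:C]:C\in\mathcal C\}$ and let $\mathbb Z[\mathbb I^{-1}]$ be the subring of $\mathbb Q$ generated by $\mathbb Z$ and $\{1/n:n\in\mathbb I\}$. Then the canonical map $\mathbb Z[\mathbb I^{-1}]\otimes A\to\mathbb Z[\mathbb I^{-1}]\otimes\mathscr A$, $1\otimes x\mapsto1\otimes x$, is an isomorphism.
   Context: Algebraic action $\sigma\colon S\curvearrowright A$: left cancellative monoid $S$, abelian group $A$, monoid homomorphism $s\mapsto\sigma_s$ into injective endomorphisms of $A$. Constructible subgroups $\mathcal C$: smallest family of subgroups of $A$ containing $A$ and closed under $C\mapsto\sigma_s(C)$ and $C\mapsto\sigma_s^{-1}C=\{a\in A:\sigma_s(a)\in C\}$. Standing assumptions: $\sigma$ faithful, non-automorphic unless $S$ is a group, satisfies (FI): $[A:\sigma_s(A)]<\infty$ for all $s\in S$ (so all $C\in\mathcal C$ have finite index), and has a globalization: a group $\mathscr S\supseteq S$ generated by $S$, an abelian group $\mathscr A\supseteq A$, and an action $\tilde\sigma$ of $\mathscr S$ on $\mathscr A$ by automorphisms with $\tilde\sigma_s|_A=\sigma_s$ for $s\in S$, satisfying (JF): if $C\in\mathcal C$, $g\in\mathscr S$ and $\tilde\sigma_g$ fixes $C$ pointwise, then $g=1$. *)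

From HB Require Import structures.
From mathcomp Require Import all_boot all_order all_algebra.
Set Implicit Arguments. Unset Strict Implicit. Unset Printing Implicit Defensive.
Import GRing.Theory.
Local Open Scope ring_scope.

Definition index_eq (M : zmodType) (C : M -> Prop) (n : nat) : Prop :=
  exists r : seq M, [/\ size r = n,
    (forall i j, (i < n)%N -> (j < n)%N -> C (nth 0 r i - nth 0 r j)%R -> i = j)
  & (forall a : M, exists2 i, (i < n)%N & C (a - nth 0 r i)%R)].

Inductive cgen (S A : Type) (sigma : S -> A -> A) : (A -> Prop) -> Prop :=
| cg_top : cgen sigma (fun _ => True)
| cg_img (s : S) (C : A -> Prop) :
    cgen sigma C -> cgen sigma (fun a => exists2 c, C c & a = sigma s c)
| cg_pre (s : S) (C : A -> Prop) :
    cgen sigma C -> cgen sigma (fun a => C (sigma s a)).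

(* membership in the family C (subsets identified up to extensional equality) *)
Definition constructible (S A : Type) (sigma : S -> A -> A) (C : A -> Prop) :=
  exists2 D, cgen sigma D & forall a, C a <-> D a.

Definition index_set (S : Type) (A : zmodType) (sigma : S -> A -> A) (n : nat) :=
  exists2 C, constructible sigma C & index_eq C n.

Inductive subring_gen (X : rat -> Prop) : rat -> Prop :=
| sg_int (z : int) : subring_gen X (z%:~R)
| sg_gen (x : rat) : X x -> subring_gen X x
| sg_add (x y : rat) : subring_gen X x -> subring_gen X y -> subring_gen X (x + y)
| sg_opp (x : rat) : subring_gen X x -> subring_gen X (- x)
| sg_mul (x y : rat) : subring_gen X x -> subring_gen X y -> subring_gen X (x * y).

Definition Zinv (I : nat -> Prop) : rat -> Prop :=
  subring_gen (fun q => exists2 n, I n & q = (n%:R)^-1).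

(* Elements of R (x) M are represented by finite formal sums
   [:: (q_1, x_1); ...; (q_k, x_k)] (q_i in R) standing for
   sum_i q_i (x) x_i; R (x) M is the quotient of the free commutative monoid on
   R x M by the congruence [tens R] generated by bi-additivity and
   0 (x) x = 0.  (This quotient is a group -- the inverse of q (x) x is
   (-q) (x) x -- and it has the universal property of the tensor product.) *)
Fixpoint Rlist (R : rat -> Prop) (M : Type) (l : seq (rat * M)) : Prop :=
  if l is p :: l' then R p.1 /\ Rlist R l' else True.

Inductive tens (R : rat -> Prop) (M : zmodType) :
    seq (rat * M) -> seq (rat * M) -> Prop :=
| te_refl l : Rlist R l -> tens R l l
| te_sym l l' : tens R l l' -> tens R l' l
| te_trans l1 l2 l3 : tens R l1 l2 -> tens R l2 l3 -> tens R l1 l3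
| te_cat l1 l1' l2 l2' :
    tens R l1 l1' -> tens R l2 l2' -> tens R (l1 ++ l2) (l1' ++ l2')
| te_comm l1 l2 :
    Rlist R l1 -> Rlist R l2 ->
    tens R (l1 ++ l2) (l2 ++ l1)
| te_addl (q1 q2 : rat) (x : M) : R q1 -> R q2 ->
    tens R [:: (q1 + q2, x)] [:: (q1, x); (q2, x)]
| te_addr (q : rat) (x y : M) : R q ->
    tens R [:: (q, x + y)] [:: (q, x); (q, y)]
| te_zero (x : M) : R 0 -> tens R [:: (0, x)] [::].


Definition tens_map (M N : Type) (f : M -> N) (l : seq (rat * M)) :
  seq (rat * N) := map (fun p => (p.1, f p.2)) l.

(* id_R (x) f is an isomorphism (it is a well-defined additive map; being an
   isomorphism means being bijective on the quotients) *)
Definition tens_map_iso (R : rat -> Prop) (M N : zmodType) (f : M -> N) : Prop :=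
  (forall l l' : seq (rat * M), Rlist R l -> Rlist R l' ->
      tens R (tens_map f l) (tens_map f l') -> tens R l l')
  /\ (forall m : seq (rat * N), Rlist R m ->
      exists2 l : seq (rat * M), Rlist R l & tens R (tens_map f l) m).

Inductive ggen (G : groupType) (X : G -> Prop) : G -> Prop :=
| gg_one : ggen X 1%g
| gg_gen x : X x -> ggen X x
| gg_mul x y : ggen X x -> ggen X y -> ggen X (x * y)%g
| gg_inv x : ggen X x -> ggen X (x^-1)%g.

Inductive zgen (M : zmodType) (X : M -> Prop) : M -> Prop :=
| zg_zero : zgen X 0%R
| zg_gen x : X x -> zgen X x
| zg_add x y : zgen X x -> zgen X y -> zgen X (x + y)%R
| zg_opp x : zgen X x -> zgen X (- x)%R.

(** If every element b of the bigger group has a multiple n b in the image of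
    A with 1/n in the coefficient ring R, then q (x) b |-> (q/n) (x) (n b) is
    a well-defined inverse of id_R (x) iota.  For R = Z[I^-1] every element of
    A has this property, and it is preserved by the automorphisms tau_s and
    tau_s^-1: if n = [A : sigma_s(A)] then n a lies in sigma_s(A) by Lagrange,
    and 1/n is in R.  Hence it is preserved by all of G, and it holds on the
    subgroup generated by the tau_g(A), which is everything. *)

From HB Require Import structures.
From mathcomp Require Import all_boot all_order all_algebra.
From Stdlib Require Import IndefiniteDescription.
Import GRing.Theory Num.Theory.
Set Implicit Arguments. Unset Strict Implicit.

Local Open Scope ring_scope.

Lemma index_eq_gt0 (M : zmodType) (C : M -> Prop) n : index_eq C n -> (0 < n)%N.
Proof. by case=> r [_ _ /(_ 0) [i i_lt_n _]]; apply: leq_ltn_trans i_lt_n. Qed.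

Lemma index_eq_mulrn (M : zmodType) (C : M -> Prop) n :
    C 0 -> (forall x y, C x -> C y -> C (x - y)) -> index_eq C n ->
  forall a, C (a *+ n).
Proof.
move=> C0 CB [r [_ r_inj r_cover]] a.
have CD x y : C x -> C y -> C (x + y).
  by move=> Cx Cy; have := CB _ _ Cx (CB _ _ C0 Cy); rewrite sub0r opprK.
(* translation by a permutes the n cosets r_i + C, so summing the
   a + r_i - r_(f i) leaves n a *)
have [f Cf] : exists f : 'I_n -> 'I_n, forall i : 'I_n, C (a + r`_i - r`_(f i)).
  apply: (functional_choice (fun i k : 'I_n => C (a + r`_i - r`_k))) => i.
  by have [k k_lt_n Ck] := r_cover (a + r`_i); exists (Ordinal k_lt_n).
have f_inj : injective f.
  move=> i i' fE; apply: val_inj; apply: r_inj (ltn_ord i) (ltn_ord i') _.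
  have := CB _ _ (Cf i) (Cf i'); rewrite fE.
  by rewrite opprB addrA subrK opprD addrACA subrr add0r.
have : C (\sum_(i < n) (a + r`_i - r`_(f i))) by apply: big_ind.
rewrite sumrB big_split /= sumr_const card_ord.
by rewrite -(reindex_inj f_inj (P := xpredT) (F := fun i : 'I_n => r`_i)) addrK.
Qed.

Lemma constructible_image (S A : Type) (sigma : S -> A -> A) s :
  constructible sigma (fun a => exists b, a = sigma s b).
Proof.
exists (fun a => exists2 b, True & a = sigma s b).
  exact: cg_img (cg_top _).
by move=> a; split=> [[b ->] | [b _ ->]]; exists b.
Qed.

Lemma subring_gen_nat (X : rat -> Prop) (k : nat) : subring_gen X k%:R.
Proof. by rewrite pmulrn; apply: sg_int. Qed.

Definition unit_multiple_witness (R : rat -> Prop) (M N : zmodType)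
    (f : M -> N) (b : N) (p : nat * M) : Prop :=
  [/\ (0 < p.1)%N, R p.1%:R^-1 & b *+ p.1 = f p.2].

Definition unit_multiple_in_image (R : rat -> Prop) (M N : zmodType)
    (f : M -> N) (b : N) : Prop :=
  exists p, unit_multiple_witness R f b p.

Section TensorOverSubringOfQ.

Variable R : rat -> Prop.
Hypothesis R_mul : forall x y, R x -> R y -> R (x * y).
Hypothesis R_nat : forall k : nat, R k%:R.

Lemma R_invn1 : R 1%:R^-1.
Proof. by rewrite invr1; apply: R_nat 1. Qed.

Lemma R_invnM m1 m2 : R m1%:R^-1 -> R m2%:R^-1 -> R (m1 * m2)%:R^-1.
Proof. by rewrite natrM invfM; apply: R_mul. Qed.

Lemma tens_mulrn (M : zmodType) (r : rat) (x : M) m : (0 < m)%N -> R r ->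
  tens R [:: (r, x *+ m)] [:: (r * m%:R, x)].
Proof.
case: m => // m _ Rr; elim: m => [|m IH].
  by rewrite mulr1n mulr1; apply: te_refl.
rewrite mulrS; apply: te_trans (te_addr _ _ Rr) _.
apply: te_trans (te_cat (te_refl (l := [:: (r, x)]) (conj Rr I)) IH) _.
rewrite [m.+2%:R]mulrS mulrDr mulr1.
by apply/te_sym/te_addl => //; apply: R_mul.
Qed.

Lemma tens_divrn (M : zmodType) (q : rat) (x : M) m :
  (0 < m)%N -> R (q / m%:R) -> tens R [:: (q / m%:R, x *+ m)] [:: (q, x)].
Proof.
move=> m_gt0 Rq; have := tens_mulrn x m_gt0 Rq.
by rewrite mulfVK // pnatr_eq0 -lt0n.
Qed.

Lemma tens_map_pointwise (M : zmodType) (g : rat * M -> rat * M) l :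
    (forall p, R p.1 -> tens R [:: g p] [:: p]) ->
  Rlist R l -> tens R (map g l) l.
Proof.
move=> gP; elim: l => [_ | p l IH [Rp Rl]]; first exact: te_refl.
exact: te_cat (gP p Rp) (IH Rl).
Qed.

Section InverseMap.

Variables (M N : zmodType) (f : {additive M -> N}).
Hypothesis f_inj : injective f.
Variable ch : N -> nat * M.
Hypothesis chP : forall b, unit_multiple_witness R f b (ch b).

Definition tens_map_inv (l : seq (rat * N)) : seq (rat * M) :=
  map (fun p => (p.1 / (ch p.2).1%:R, (ch p.2).2)) l.

Lemma Rlist_tens_map_inv l : Rlist R l -> Rlist R (tens_map_inv l).
Proof.
elim: l => //= p l IH [Rp Rl]; split; last exact: IH.
by case: (chP p.2) => _ Rm _; apply: R_mul.
Qed.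

Lemma tens_map_inv_witness q b m a :
    R q -> (0 < m)%N -> R m%:R^-1 -> b *+ m = f a ->
  tens R [:: (q / m%:R, a)] (tens_map_inv [:: (q, b)]).
Proof.
rewrite /tens_map_inv /=; case: (chP b); move: (ch b) => [n c] /=.
move=> n_gt0 Rn bn Rq m_gt0 Rm bm.
have acE : a *+ n = c *+ m.
  by apply: f_inj; rewrite !raddfMn -bm -bn -!mulrnA mulnC.
have Ra := tens_divrn a n_gt0 (R_mul (R_mul Rq Rm) Rn).
have Rc := tens_divrn c m_gt0 (R_mul (R_mul Rq Rn) Rm).
rewrite acE in Ra; rewrite [q / _ / _]mulrAC in Rc.
exact: te_trans (te_sym Ra) Rc.
Qed.

Lemma tens_map_inv_addr q x y : R q ->
  tens R (tens_map_inv [:: (q, x + y)]) (tens_map_inv [:: (q, x); (q, y)]).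
Proof.
move=> Rq; have [[mx ax] [/= mx_gt0 Rmx xE]] := ex_intro _ _ (chP x).
have [[my ay] [/= my_gt0 Rmy yE]] := ex_intro _ _ (chP y).
have m_gt0 : (0 < mx * my)%N by rewrite muln_gt0 mx_gt0.
have Rm := R_invnM Rmx Rmy.
have Rqm : R (q / (mx * my)%:R) by apply: R_mul.
have axE : x *+ (mx * my) = f (ax *+ my) by rewrite raddfMn -xE mulrnA.
have ayE : y *+ (mx * my) = f (ay *+ mx) by rewrite raddfMn -yE mulnC mulrnA.
have xyE : (x + y) *+ (mx * my) = f (ax *+ my + ay *+ mx).
  by rewrite raddfD -axE -ayE mulrnDl.
apply: te_trans (te_sym (tens_map_inv_witness Rq m_gt0 Rm xyE)) _.
apply: te_trans (te_addr _ _ Rqm) _.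
exact: te_cat (tens_map_inv_witness Rq m_gt0 Rm axE)
              (tens_map_inv_witness Rq m_gt0 Rm ayE).
Qed.

Lemma tens_map_inv_compat l l' :
  tens R l l' -> tens R (tens_map_inv l) (tens_map_inv l').
Proof.
elim=> {l l'} [l Rl | l l' _ IH | l1 l2 l3 _ IH1 _ IH2
              | l1 l1' l2 l2' _ IH1 _ IH2 | l1 l2 R1 R2
              | q1 q2 x R1 R2 | q x y Rq | x R0].
- exact/te_refl/Rlist_tens_map_inv.
- exact: te_sym.
- exact: te_trans IH2.
- by rewrite /tens_map_inv !map_cat; apply: te_cat.
- by rewrite /tens_map_inv !map_cat; apply: te_comm; apply: Rlist_tens_map_inv.
- rewrite /= mulrDl; case: (chP x) => _ Rm _.
  by apply: te_addl; apply: R_mul.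
- exact: tens_map_inv_addr.
- by rewrite /= mul0r; apply: te_zero.
Qed.

Lemma tens_mapK l : Rlist R l -> tens R (tens_map_inv (tens_map f l)) l.
Proof.
rewrite /tens_map_inv /tens_map -map_comp; apply: tens_map_pointwise => -[q a] /= Rq.
have := tens_map_inv_witness Rq (ltn0Sn 0) R_invn1 (mulr1n (f a)).
by rewrite divr1; apply: te_sym.
Qed.

Lemma tens_map_invK l : Rlist R l -> tens R (tens_map f (tens_map_inv l)) l.
Proof.
rewrite /tens_map_inv /tens_map -map_comp; apply: tens_map_pointwise => -[q b] /= Rq.
by case: (chP b) => n_gt0 Rn <-; apply: tens_divrn => //; apply: R_mul.
Qed.

Lemma tens_map_iso_of_inverse : tens_map_iso R f.
Proof.
split=> [l l' Rl Rl' fll' | m Rm].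
- apply: te_trans (te_sym (tens_mapK Rl)) _.
  exact: te_trans (tens_map_inv_compat fll') (tens_mapK Rl').
- exists (tens_map_inv m); first exact: Rlist_tens_map_inv.
  exact: tens_map_invK.
Qed.

End InverseMap.

Lemma tens_map_iso_of_unit_multiples (M N : zmodType) (f : {additive M -> N}) :
  injective f -> (forall b, unit_multiple_in_image R f b) -> tens_map_iso R f.
Proof.
move=> f_inj /functional_choice [ch chP].
exact: (tens_map_iso_of_inverse f_inj chP).
Qed.

Section UnitMultiples.

Variables (M N : zmodType) (f : {additive M -> N}).
Local Notation P := (unit_multiple_in_image R f).

Lemma unit_multiple_image a : P (f a).
Proof. by exists (1%N, a); split=> //; apply: R_invn1. Qed.

Lemma unit_multipleD b1 b2 : P b1 -> P b2 -> P (b1 + b2).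
Proof.
move=> [[m1 a1] [/= m1_gt0 Rm1 b1E]] [[m2 a2] [/= m2_gt0 Rm2 b2E]].
exists ((m1 * m2)%N, a1 *+ m2 + a2 *+ m1); split=> /=.
- by rewrite muln_gt0 m1_gt0.
- exact: R_invnM.
- by rewrite raddfD !raddfMn -b1E -b2E -!mulrnA mulrnDl [(m2 * m1)%N]mulnC.
Qed.

Lemma unit_multipleN b : P b -> P (- b).
Proof.
move=> [[m a] [/= m_gt0 Rm bE]]; exists (m, - a).
by split=> //=; rewrite mulNrn raddfN bE.
Qed.

Lemma zgen_unit_multiple (X : N -> Prop) b :
  (forall x, X x -> P x) -> zgen X b -> P b.
Proof.
move=> XP; elim=> [| x /XP // | x y _ Px _ Py | x _ Px].
- by rewrite -(raddf0 f); apply: unit_multiple_image.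
- exact: unit_multipleD.
- exact: unit_multipleN.
Qed.

Lemma unit_multiple_additive (h : {additive N -> N}) b :
  (forall a, P (h (f a))) -> P b -> P (h b).
Proof.
move=> hP [[m a] [/= m_gt0 Rm bE]]; have [[m' a'] [/= m'_gt0 Rm' haE]] := hP a.
exists ((m * m')%N, a'); split=> /=; first by rewrite muln_gt0 m_gt0.
- exact: R_invnM.
- by rewrite mulrnA -(raddfMn h) bE haE.
Qed.

End UnitMultiples.

End TensorOverSubringOfQ.

Section Globalization.

Variables (S : monoidType) (A : zmodType) (sigma : S -> {additive A -> A}).
Hypothesis sigma_FI :
  forall s, exists n, index_eq (fun a => exists b, a = sigma s b) n.
Variables (G : groupType) (j : S -> G).
Hypothesis G_gen : forall g : G, ggen (fun h => exists s, h = j s) g.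
Variables (B : zmodType) (iota : {additive A -> B}).
Variable tau : G -> {additive B -> B}.
Hypothesis tau1 : forall b, tau 1%g b = b.
Hypothesis tauM : forall g h b, tau (g * h)%g b = tau g (tau h b).
Hypothesis tau_ext : forall s a, tau (j s) (iota a) = iota (sigma s a).

Local Notation R := (Zinv (index_set sigma)).
Local Notation P := (unit_multiple_in_image R iota).

Let R_mul : forall x y, R x -> R y -> R (x * y) := @sg_mul _.
Let R_nat : forall k : nat, R k%:R := subring_gen_nat _.

Lemma unit_multiple_tau_inv s a : P (tau (j s)^-1 (iota a)).
Proof.
have [n index_n] := sigma_FI s.
have [a' a'E] : exists b, a *+ n = sigma s b.
  apply: index_eq_mulrn index_n a; first by exists 0; rewrite raddf0.
  by move=> _ _ [b1 ->] [b2 ->]; exists (b1 - b2); rewrite raddfB.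
have index_set_n : index_set sigma n.
  exists (fun a => exists b, a = sigma s b) => //.
  exact: constructible_image.
exists (n, a'); split=> /=; first exact: index_eq_gt0 index_n.
- by apply: sg_gen; exists n.
- by rewrite -!raddfMn a'E -tau_ext -tauM mulVg tau1.
Qed.

Definition preserves_unit_multiples (g : G) : Prop :=
  forall b, P b -> P (tau g b).

Lemma preserves_unit_multiples_ggen g :
  ggen (fun h => exists s, h = j s) g ->
  preserves_unit_multiples g /\ preserves_unit_multiples g^-1.
Proof.
have Pmul x y : preserves_unit_multiples x -> preserves_unit_multiples y ->
    preserves_unit_multiples (x * y).
  by move=> Px Py b Pb; rewrite tauM; apply/Px/Py.
elim=> {g} [| _ [s ->] | x y _ [Px Px'] _ [Py Py'] | x _ [Px Px']].
- by rewrite invg1; split=> b; rewrite tau1.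
- split=> b Pb; apply: (unit_multiple_additive R_mul _ Pb) => a.
    by rewrite tau_ext; apply: (unit_multiple_image R_nat).
  exact: unit_multiple_tau_inv.
- by rewrite invgM; split; apply: Pmul.
- by rewrite invgK.
Qed.

Hypothesis B_gen :
  forall b : B, zgen (fun x => exists g a, x = tau g (iota a)) b.

Lemma unit_multiple_globalization b : P b.
Proof.
apply: (zgen_unit_multiple R_mul R_nat _ (B_gen b)) => _ [g [a ->]].
have [Pg _] := preserves_unit_multiples_ggen (G_gen g).
exact/Pg/(unit_multiple_image R_nat).
Qed.

End Globalization.

Unset Implicit Arguments. Set Strict Implicit.

Theorem lemma3p21
  (* the left cancellative monoid S *)
  (S : monoidType)
  (S_lcancel : forall s t u : S, (s * t = s * u)%g -> t = u)
  (* the abelian group A and the algebraic action sigma : S -> End(A) *)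
  (A : zmodType) (sigma : S -> {additive A -> A})
  (sigma_inj : forall s, injective (sigma s))
  (sigma1 : forall a, sigma 1%g a = a)
  (sigmaM : forall s t a, sigma (s * t)%g a = sigma s (sigma t a))
  (* standing assumptions: faithful *)
  (sigma_faithful : forall s t, (forall a, sigma s a = sigma t a) -> s = t)
  (* non-automorphic unless S is a group *)
  (sigma_nonaut : ~ (forall s : S, exists t, (s * t = 1)%g /\ (t * s = 1)%g) ->
       exists s, ~ (forall a, exists b, sigma s b = a))
  (* (FI) *)
  (sigma_FI : forall s, exists n, index_eq (fun a => exists b, a = sigma s b) n)
  (* globalization: a group G containing S (via the injective monoid
     homomorphism j) and generated by S *)
  (G : groupType) (j : S -> G) (j_inj : injective j)
  (j1 : j 1%g = 1%g) (jM : forall s t, j (s * t)%g = (j s * j t)%g)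
  (G_gen : forall g : G, ggen (fun h => exists s, h = j s) g)
  (* an abelian group B containing A (via the injective additive map iota) *)
  (B : zmodType) (iota : {additive A -> B}) (iota_inj : injective iota)
  (* an action tau of G on B by automorphisms *)
  (tau : G -> {additive B -> B}) (tau_bij : forall g, bijective (tau g))
  (tau1 : forall b, tau 1%g b = b)
  (tauM : forall g h b, tau (g * h)%g b = tau g (tau h b))
  (* extending sigma *)
  (tau_ext : forall s a, tau (j s) (iota a) = iota (sigma s a))
  (* (JF) *)
  (JF : forall (C : A -> Prop) (g : G), constructible sigma C ->
        (forall c, C c -> tau g (iota c) = iota c) -> g = 1%g)
  (* B is generated by the union of the tau_g(A) *)
  (B_gen : forall b : B, zgen (fun x => exists g a, x = tau g (iota a)) b) :
  tens_map_iso (Zinv (index_set sigma)) iota.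
Proof.
apply: tens_map_iso_of_unit_multiples iota_inj _.
- exact: sg_mul.
- exact: subring_gen_nat.
- exact: (unit_multiple_globalization sigma_FI G_gen tau1 tauM tau_ext B_gen).
Qed.
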